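(* Let $n\ge 1$ and $\ln\hat q=[F_n(z_n)]^{-1}\ln z_n$. Then $$\vartheta(n)=\sum_{p\le n,\ p\text{ prime}}\ln p = 1_n^T\ln\hat q=\sum_{i=1}^n(\ln\hat q)_i.$$
   Context: $z_n=(1,\dots,n)^T$; logarithms of vectors are entry-wise; $1_n$ is the all-ones vector. For $1\le i\le n$, $e_{\bar i|n}\in\mathbb{R}^n$ has $k$-th entry $1$ if $i\mid k$, else $0$. For $2\le i\le n$, $f_{i|n}=\sum_{t=1}^{\lfloor \log_i n\rfloor} e_{\overline{i^t}|n}$, and $f_{1|n}=1_n$. $F_n(z_n)=[f_{1|n}\ \cdots\ f_{n|n}]\in\mathbb{R}^{n\times n}$, which is invertible. *)

From Stdlib Require Import Reals ZArith Znumtheory List Arith.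
Open Scope R_scope.

Fixpoint sum1 (n : nat) (f : nat -> R) : R :=
  match n with
  | O => 0
  | S m => sum1 m f + f (S m)
  end.

(* Entry k of e_{\bar i|n} (1-based): 1 if i | k, else 0. *)
Definition e_entry (i k : nat) : R :=
  if Nat.eqb (Nat.modulo k i) 0 then 1 else 0.

(* For i >= 2,
   f_{i|n} = sum_{t=1}^{floor(log_i n)} e_{\bar{i^t}|n}; the exponents
   t = 1 .. floor(log_i n) are exactly the t >= 1 with i^t <= n, and all
   of them satisfy t <= n, so the sum is taken over t in 1..n with i^t <= n. *)
Definition f_entry (n i k : nat) : R :=
  if Nat.eqb i 1 then 1
  else sum1 n (fun t => if Nat.leb (Nat.pow i t) n then e_entry (Nat.pow i t) k else 0).

(* F_n(z_n) as a matrix: entry in row k, column i (1-based) is (f_{i|n})_k. *)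
Definition Fmat (n : nat) (k i : nat) : R := f_entry n i k.

Definition theta (n : nat) : R :=
  sum1 n (fun p => if prime_dec (Z.of_nat p) then ln (INR p) else 0).

From Stdlib Require Import Reals ZArith Znumtheory List Arith Lia Lra.
From mathcomp Require ssreflect ssrbool eqtype ssrnat div prime zify.
Open Scope R_scope.

(* [F_n(z_n)] is lower unitriangular: column [i] vanishes above row [i] and
   has a [1] in row [i], so [F_n(z_n) x = ln z_n] has a unique solution.
   In a prime column [p], row [k] counts the exponents [t >= 1] with
   [p^t | k], i.e. it is the valuation [v_p(k)].  Hence the vector with
   entry [ln p] at primes and [0] elsewhere is that solution, because
   [ln k = Σ_p v_p(k) ln p]; its entries sum to [θ(n)]. *)

Lemma sum1_ext n f g :
  (forall i, (1 <= i <= n)%nat -> f i = g i) -> sum1 n f = sum1 n g.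
Proof.
  induction n as [|n IH]; intros Hfg; cbn [sum1]; [reflexivity|].
  rewrite IH by (intros; apply Hfg; lia). rewrite Hfg by lia. reflexivity.
Qed.

Lemma sum1_add n f g : sum1 n (fun i => f i + g i) = sum1 n f + sum1 n g.
Proof. induction n as [|n IH]; cbn [sum1]; [lra|]. rewrite IH. lra. Qed.

Lemma sum1_zero n : sum1 n (fun _ => 0) = 0.
Proof. induction n as [|n IH]; cbn [sum1]; lra. Qed.

Lemma sum1_delta n p c : (1 <= p <= n)%nat ->
  sum1 n (fun i => if Nat.eqb i p then c else 0) = c.
Proof.
  induction n as [|n IH]; intros Hp; cbn [sum1]; [lia|].
  destruct (Nat.eqb_spec (S n) p) as [<-|Hne].
  - rewrite (sum1_ext n _ (fun _ => 0)), sum1_zero.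
    + lra.
    + intros i Hi. destruct (Nat.eqb_spec i (S n)); [lia|reflexivity].
  - rewrite IH by lia. lra.
Qed.

Lemma sum1_leb_count n m :
  sum1 n (fun t => if Nat.leb t m then 1 else 0) = INR (Nat.min n m).
Proof.
  induction n as [|n IH]; cbn [sum1]; [reflexivity|]. rewrite IH.
  destruct (Nat.leb_spec (S n) m).
  - rewrite !Nat.min_l, S_INR by lia. lra.
  - rewrite !Nat.min_r by lia. lra.
Qed.

Lemma sum1_trunc n m f : (m <= n)%nat ->
  (forall i, (m < i <= n)%nat -> f i = 0) -> sum1 n f = sum1 m f.
Proof.
  induction n as [|n IH]; intros Hm Hf.
  - replace m with 0%nat by lia. reflexivity.
  - destruct (Nat.eq_dec m (S n)) as [->|Hne]; [reflexivity|].
    cbn [sum1]. rewrite IH, Hf by (lia || (intros; apply Hf; lia)). lra.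
Qed.

Section LowerUnitriangular.

Variables (n : nat) (A : nat -> nat -> R).
Hypothesis A_upper : forall k i, (1 <= k < i)%nat -> A k i = 0.
Hypothesis A_diag : forall k, (1 <= k <= n)%nat -> A k k = 1.

Lemma sum1_lower_row k x : (1 <= k <= n)%nat ->
  sum1 n (fun i => A k i * x i) = sum1 (k - 1) (fun i => A k i * x i) + x k.
Proof.
  intros Hk. rewrite (sum1_trunc n k).
  - replace k with (S (k - 1)) at 1 by lia. cbn [sum1].
    replace (S (k - 1)) with k by lia. rewrite A_diag by lia. lra.
  - lia.
  - intros i Hi. rewrite A_upper by lia. lra.
Qed.

Lemma lower_unitriangular_solution_unique x y :
  (forall k, (1 <= k <= n)%nat ->
     sum1 n (fun i => A k i * x i) = sum1 n (fun i => A k i * y i)) ->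
  forall k, (1 <= k <= n)%nat -> x k = y k.
Proof.
  intros Hxy k. induction k as [k IH] using lt_wf_ind. intros Hk.
  specialize (Hxy k Hk). rewrite !sum1_lower_row in Hxy by exact Hk.
  rewrite (sum1_ext (k - 1) (fun i => A k i * x i) (fun i => A k i * y i)) in Hxy.
  - lra.
  - intros i Hi. rewrite IH by lia. reflexivity.
Qed.

End LowerUnitriangular.

Lemma Fmat_upper n k i : (1 <= k < i)%nat -> Fmat n k i = 0.
Proof.
  intros Hki. unfold Fmat, f_entry. destruct (Nat.eqb_spec i 1); [lia|].
  rewrite (sum1_ext n _ (fun _ => 0)), sum1_zero; [reflexivity|].
  intros t Ht. destruct (Nat.leb (Nat.pow i t) n); [|reflexivity].
  assert (i <= Nat.pow i t)%nat.
  { rewrite <- (Nat.pow_1_r i) at 1. apply Nat.pow_le_mono_r; lia. }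
  unfold e_entry. rewrite Nat.mod_small, (proj2 (Nat.eqb_neq k 0)) by lia.
  reflexivity.
Qed.

Lemma Fmat_diag n k : (1 <= k <= n)%nat -> Fmat n k k = 1.
Proof.
  intros Hk. unfold Fmat, f_entry. destruct (Nat.eqb_spec k 1); [reflexivity|].
  rewrite (sum1_ext n _ (fun t => if Nat.eqb t 1 then 1 else 0)).
  - apply sum1_delta. lia.
  - intros t Ht. destruct (Nat.eqb_spec t 1) as [->|Ht1].
    + rewrite Nat.pow_1_r, (proj2 (Nat.leb_le k n)) by lia.
      unfold e_entry. rewrite Nat.Div0.mod_same. reflexivity.
    + destruct (Nat.leb (Nat.pow k t) n); [|reflexivity].
      assert (k < Nat.pow k t)%nat.
      { rewrite <- (Nat.pow_1_r k) at 1. apply Nat.pow_lt_mono_r; lia. }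
      unfold e_entry. rewrite Nat.mod_small, (proj2 (Nat.eqb_neq k 0)) by lia.
      reflexivity.
Qed.

(* The vector [ln q̂] of the statement; [theta n] is by definition its sum. *)
Definition prime_log (p : nat) : R :=
  if prime_dec (Z.of_nat p) then ln (INR p) else 0.

(* Kept in a module: once imported, ssrnat's [<=] would capture the [%nat]
   comparisons in the statement of [mainTheorem9]. *)
Module PrimeValuation.
Import ssreflect ssrbool eqtype ssrnat div prime zify.
Local Open Scope nat_scope.

Lemma divideP d m : reflect (Nat.divide d m) (d %| m).
Proof. exact: dvdnP. Qed.

Lemma eqb_mod0_dvdn d k : Nat.eqb (k mod d) 0 = (d %| k).
Proof. by apply/Nat.eqb_spec/divideP; rewrite Nat.Lcm0.mod_divide. Qed.

Lemma Nat_pow_expn m t : Nat.pow m t = m ^ t.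
Proof. by elim: t => [|t IH] //=; rewrite expnS -IH. Qed.

Lemma prime_Z_of_nat p : Znumtheory.prime (Z.of_nat p) <-> prime p.
Proof.
  rewrite -prime_alt. split.
  - move=> [p_gt1 no_div]. apply/primeP; split; first lia.
    move=> d /dvdnP [c Hc].
    apply: contraT => /norP [/eqP d_ne1 /eqP d_nep].
    have c_gt0 : 0 < c by move: Hc; case: c => //; lia.
    case: (no_div (Z.of_nat d)); last by exists (Z.of_nat c); lia.
    nia.
  - move=> /primeP [p_gt1 divs]. split; first lia.
    move=> m m_bounds [c Hc].
    have : Z.to_nat m %| p by apply/dvdnP; exists (Z.to_nat c); nia.
    by move=> /divs /orP [] /eqP; lia.
Qed.

Lemma prime_logE p : prime_log p = if prime p then ln (INR p) else 0%R.
Proof.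
  rewrite /prime_log; case: prime_dec => [/prime_Z_of_nat ->|] //.
  by case: (boolP (prime p)) => // /prime_Z_of_nat.
Qed.

Lemma Fmat_prime n k p : prime p -> 0 < k <= n -> Fmat n k p = INR (logn p k).
Proof.
  move=> p_pr /andP [k_gt0 k_le_n]; have p_gt1 := prime_gt1 p_pr.
  have log_le_n : logn p k <= n.
    have := ltn_expl (logn p k) p_gt1.
    have := dvdn_leq k_gt0 (pfactor_dvdnn p k); lia.
  rewrite /Fmat /f_entry; case: Nat.eqb_spec => [|_]; first lia.
  rewrite (sum1_ext n _ (fun t => if Nat.leb t (logn p k) then 1%R else 0%R)).
    by rewrite sum1_leb_count; congr INR; lia.
  move=> t _; rewrite /e_entry Nat_pow_expn eqb_mod0_dvdn pfactor_dvdn //.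
  case: (Nat.leb_spec t (logn p k)) => t_log.
  - have pt_le_k : p ^ t <= k.
      by apply: dvdn_leq => //; rewrite pfactor_dvdn //; lia.
    have -> : Nat.leb (p ^ t) n by apply/Nat.leb_le; lia.
    by have -> : t <= logn p k by lia.
  - have -> : t <= logn p k = false by lia.
    by case: Nat.leb.
Qed.

Lemma sum1_logn_prime_log n k : 0 < k <= n ->
  sum1 n (fun i => INR (logn i k) * prime_log i)%R = ln (INR k).
Proof.
  elim/ltn_ind: k => k IH /andP [k_gt0 k_le_n].
  have [k_le1|k_gt1] := leqP k 1.
    have -> : k = 1 by lia.
    rewrite ln_1 -(sum1_zero n); apply: sum1_ext => i _.
    by rewrite logn1 Rmult_0_l.
  set p := pdiv k; set m := k %/ p.
  have p_pr : prime p := pdiv_prime k_gt1.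
  have p_gt0 : 0 < p := prime_gt0 p_pr.
  have k_mp : k = m * p by rewrite divnK ?pdiv_dvd.
  have m_gt0 : 0 < m by move: k_gt0; rewrite k_mp muln_gt0 => /andP [].
  have m_lt_k : m < k by rewrite k_mp -[m in m < _]muln1 ltn_pmul2l // prime_gt1.
  rewrite (sum1_ext n _ (fun i => INR (logn i m) * prime_log i +
                                 if Nat.eqb i p then ln (INR p) else 0))%R.
    rewrite sum1_add (IH m m_lt_k); last lia.
    rewrite sum1_delta; last by move/leP: (pdiv_leq k_gt0); lia.
    by rewrite k_mp mult_INR ln_mult //; apply: lt_0_INR; lia.
  move=> i _; rewrite k_mp lognM // (logn_prime i p_pr) -plusE plus_INR Rmult_plus_distr_r.
  case: (Nat.eqb_spec i p) => [->|i_ne_p].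
    by rewrite eqxx Rmult_1_l prime_logE p_pr.
  have -> : (i == p) = false by apply/eqP.
  by rewrite /= Rmult_0_l Rplus_0_r.
Qed.

Lemma Fmat_prime_log n k : (1 <= k)%coq_nat /\ (k <= n)%coq_nat ->
  sum1 n (fun i => Fmat n k i * prime_log i)%R = ln (INR k).
Proof.
  move=> k_bounds; rewrite -(sum1_logn_prime_log n k); last lia.
  apply: sum1_ext => i _; rewrite prime_logE.
  case: (boolP (prime i)) => [i_pr|_]; last by rewrite !Rmult_0_r.
  by rewrite Fmat_prime //; lia.
Qed.
End PrimeValuation.

Theorem mainTheorem9 (n : nat) (Hn : (1 <= n)%nat) (lnq : nat -> R)
  (Hq : forall k : nat, (1 <= k <= n)%nat ->
          sum1 n (fun i => Fmat n k i * lnq i) = ln (INR k)) :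
  theta n = sum1 n lnq.
Proof.
  assert (lnq_eq : forall k, (1 <= k <= n)%nat -> prime_log k = lnq k).
  { apply (lower_unitriangular_solution_unique n (Fmat n)).
    - apply Fmat_upper.
    - apply Fmat_diag.
    - intros k Hk. rewrite Hq, PrimeValuation.Fmat_prime_log by exact Hk. reflexivity. }
  change (sum1 n prime_log = sum1 n lnq).
  exact (sum1_ext n _ _ lnq_eq).
Qed.
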